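(* Let $\alpha=(n_1,m_1,\dots,n_p,m_p)\in\mathbb Z_{\ge0}^{2p}$, $a=(a_{hk})\in I(\alpha)$ and $i,j\in\{1,\dots,p\}$. (1) Suppose $a_{ij}=L_{ij}(\alpha,a)$. If $L_{ij}(\alpha,a)=m_j-\sum_{h=1}^{i-1}a_{hj}$, then $a_{qj}=0$ for all $q=i+1,\dots,p$. If $L_{ij}(\alpha,a)=n_i-\sum_{k=1}^{j-1}a_{ik}$, then $a_{it}=0$ for all $t=j+1,\dots,p$. (2) Suppose $a_{ij}=l_{ij}(\alpha,a)$ and $l_{ij}(\alpha,a)=\sum_{h=1}^i n_h-\sum_{h=j+1}^p m_h-\sum_{h\le i,\,k\le j,\,(h,k)\neq(i,j)}a_{hk}$. Then $a_{it}=m_t-\sum_{h=1}^{i-1}a_{ht}$ for all $t=j+1,\dots,p$; $a_{qj}=n_q-\sum_{k=1}^{j-1}a_{qk}$ for all $q=i+1,\dots,p$; and $a_{qt}=0$ for all $q=i+1,\dots,p$ and $t=j+1,\dots,p$.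
   Context: $I(\alpha)$ is the set of $a=(a_{11},\dots,a_{1p},a_{21},\dots,a_{pp})\in\mathbb Z_{\ge0}^{p^2}$ with $l_{ij}(\alpha,a)\le a_{ij}\le L_{ij}(\alpha,a)$ for all $i,j=1,\dots,p$, where $$l_{ij}(\alpha,a)=\max\Big(0,\ \sum_{h=1}^i n_h-\sum_{h=j+1}^p m_h-\sum_{\substack{h\le i,\,k\le j\\ (h,k)\neq(i,j)}}a_{hk}\Big),\qquad L_{ij}(\alpha,a)=\min\Big(n_i-\sum_{h=1}^{j-1}a_{ih},\ m_j-\sum_{h=1}^{i-1}a_{hj}\Big).$$ (The paper writes $\wedge$ for this max and $\vee$ for this min.) *)

(* Indices run over 1..p (natural numbers); the vector
   alpha = (n_1,m_1,...,n_p,m_p) is given by n m : nat -> nat and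
   a = (a_hk) by a : nat -> nat -> nat (values outside 1..p are irrelevant).
   l_ij and L_ij are computed in int (no truncated subtraction). *)
From mathcomp Require Import all_boot all_order all_algebra.
Set Implicit Arguments. Unset Strict Implicit. Unset Printing Implicit Defensive.
Import Order.TTheory GRing.Theory Num.Theory.
Local Open Scope ring_scope.

Definition lraw (p : nat) (n m : nat -> nat) (a : nat -> nat -> nat) (i j : nat) : int :=
  (\sum_(1 <= h < i.+1) (n h)%:Z) - (\sum_(j.+1 <= h < p.+1) (m h)%:Z)
  - \sum_(1 <= h < i.+1) \sum_(1 <= k < j.+1 | (h, k) != (i, j)) (a h k)%:Z.

Definition lij (p : nat) (n m : nat -> nat) (a : nat -> nat -> nat) (i j : nat) : int :=
  Num.max 0 (lraw p n m a i j).

Definition Lrow (n : nat -> nat) (a : nat -> nat -> nat) (i j : nat) : int :=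
  (n i)%:Z - \sum_(1 <= h < j) (a i h)%:Z.
Definition Lcol (m : nat -> nat) (a : nat -> nat -> nat) (i j : nat) : int :=
  (m j)%:Z - \sum_(1 <= h < i) (a h j)%:Z.

Definition Lij (n m : nat -> nat) (a : nat -> nat -> nat) (i j : nat) : int :=
  Num.min (Lrow n a i j) (Lcol m a i j).

Definition inI (p : nat) (n m : nat -> nat) (a : nat -> nat -> nat) : Prop :=
  forall i j, (1 <= i <= p)%N -> (1 <= j <= p)%N ->
    lij p n m a i j <= (a i j)%:Z <= Lij n m a i j.

From mathcomp Require Import all_boot all_order all_algebra.
From mathcomp Require Import zify.
Import Order.TTheory GRing.Theory Num.Theory.
Local Open Scope ring_scope.

(* Membership in I(alpha) packs three families of inequalities: each row prefix
   a_i1 + ... + a_ij is at most n_i and each column prefix a_1j + ... + a_ij is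
   at most m_j (from the upper bounds L_ij), while each block sum
   S_ij = sum_{h <= i, k <= j} a_hk is at least
   n_1 + ... + n_i - (m_(j+1) + ... + m_p) (from the lower bounds l_ij).
   Attaining L_ij saturates a row or a column prefix, which forces the later
   entries of that row or column to vanish.  Attaining the unclipped l_ij turns
   the block inequality at (i, j) into an equality; comparing it with the block
   inequalities at (i, p) and (p, j) saturates the first i entries of every
   column t > j and the first j entries of every row q > i, and a saturated
   column t has a_qt = 0 below row i. *)

Section NonnegSums.
Variable R : numDomainType.

Lemma ler_sum_nat_eq (F G : nat -> R) lo hi :
  (forall k, (lo <= k < hi)%N -> F k <= G k) ->
  \sum_(lo <= k < hi) G k <= \sum_(lo <= k < hi) F k ->
  forall k, (lo <= k < hi)%N -> F k = G k.
Proof.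
move=> leFG leGF k k_in; apply/eqP; rewrite eq_sym -subr_eq0.
have GF_ge0 i : (lo <= i < hi)%N -> 0 <= G i - F i by move/leFG; rewrite subr_ge0.
have : \sum_(lo <= i < hi) (G i - F i) == 0.
  rewrite eq_le sumrB subr_le0 leGF -sumrB big_nat.
  by apply: sumr_ge0 => i; apply: GF_ge0.
rewrite big_nat psumr_eq0; last exact: GF_ge0.
by move/allP/(_ k); rewrite mem_index_iota k_in /= => /(_ isT).
Qed.

Lemma sum_prefix_saturated_eq0 (F : nat -> R) lo i q c :
  (forall k, 0 <= F k) -> (lo <= i <= q)%N ->
  \sum_(lo <= k < i) F k = c -> \sum_(lo <= k < q.+1) F k <= c -> F q = 0.
Proof.
move=> F_ge0 /andP[lo_i i_q] sum_i sum_q; apply/le_anti; rewrite F_ge0 andbT.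
move: sum_q; rewrite big_nat_recr ?(leq_trans lo_i) //= (big_cat_nat lo_i i_q) /= sum_i.
rewrite -addrA -[X in _ <= X]addr0 lerD2l => /(le_trans _); apply.
by rewrite lerDr big_nat sumr_ge0.
Qed.

End NonnegSums.

Lemma range1_of_gt {k l p} : (k < l <= p)%N -> (1 <= l <= p)%N.
Proof. by case/andP=> k_lt_l ->; rewrite (leq_ltn_trans (leq0n k) k_lt_l). Qed.

Definition rowsum (a : nat -> nat -> nat) (i j : nat) : int :=
  \sum_(1 <= k < j.+1) (a i k)%:Z.
Definition colsum (a : nat -> nat -> nat) (i j : nat) : int :=
  \sum_(1 <= h < i.+1) (a h j)%:Z.
Definition blocksum (a : nat -> nat -> nat) (i j : nat) : int :=
  \sum_(1 <= h < i.+1) rowsum a h j.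

Section Blocks.
Variable a : nat -> nat -> nat.

Lemma Lrow_rowsum (n : nat -> nat) i j :
  (0 < j)%N -> Lrow n a i j = (n i)%:Z - rowsum a i j + (a i j)%:Z.
Proof. by move=> j_gt0; rewrite /Lrow /rowsum big_nat_recr //= opprD addrA addrNK. Qed.

Lemma Lcol_colsum (m : nat -> nat) i j :
  (0 < i)%N -> Lcol m a i j = (m j)%:Z - colsum a i j + (a i j)%:Z.
Proof. by move=> i_gt0; rewrite /Lcol /colsum big_nat_recr //= opprD addrA addrNK. Qed.

Lemma sum_off_corner i j : (0 < i)%N -> (0 < j)%N ->
  \sum_(1 <= h < i.+1) \sum_(1 <= k < j.+1 | (h, k) != (i, j)) (a h k)%:Z
  = blocksum a i j - (a i j)%:Z.
Proof.
move=> i_gt0 j_gt0; rewrite /blocksum !(big_nat_recr i) //= /rowsum.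
have -> : \sum_(1 <= h < i) \sum_(1 <= k < j.+1 | (h, k) != (i, j)) (a h k)%:Z
          = \sum_(1 <= h < i) \sum_(1 <= k < j.+1) (a h k)%:Z.
  apply: eq_big_nat => h /andP[_ h_lt_i]; apply: eq_bigl => k.
  by rewrite xpair_eqE (ltn_eqF h_lt_i).
rewrite (big_nat_recr j) //= addrA addrK [X in _ + X = _]big_mkcond.
rewrite (big_nat_recr j) //= eqxx addr0; congr (_ + _).
by apply: eq_big_nat => k /andP[_ k_lt_j]; rewrite xpair_eqE eqxx (ltn_eqF k_lt_j).
Qed.

Lemma lraw_blocksum p (n m : nat -> nat) i j : (0 < i)%N -> (0 < j)%N ->
  lraw p n m a i j = \sum_(1 <= h < i.+1) (n h)%:Z - \sum_(j.+1 <= h < p.+1) (m h)%:Z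
                     - blocksum a i j + (a i j)%:Z.
Proof. by move=> i_gt0 j_gt0; rewrite /lraw sum_off_corner // opprB addrA addrAC. Qed.

Lemma blocksum_splitl p i j : (i <= p)%N ->
  blocksum a p j = blocksum a i j + \sum_(i.+1 <= q < p.+1) rowsum a q j.
Proof. by move=> i_le_p; rewrite /blocksum (@big_cat_nat _ _ _ i.+1). Qed.

Lemma blocksum_splitr p i j : (j <= p)%N ->
  blocksum a i p = blocksum a i j + \sum_(j.+1 <= t < p.+1) colsum a i t.
Proof.
move=> j_le_p; rewrite /colsum exchange_big_nat /blocksum -big_split /=.
by apply: eq_big_nat => h _; rewrite /rowsum (@big_cat_nat _ _ _ j.+1).
Qed.

End Blocks.

Section InI.
Context {p : nat} {n m : nat -> nat} {a : nat -> nat -> nat}.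
Hypothesis aI : inI p n m a.

Lemma inI_rowsum_le {i j} : (1 <= i <= p)%N -> (1 <= j <= p)%N ->
  rowsum a i j <= (n i)%:Z.
Proof.
move=> Hi /[dup] Hj /andP[j_gt0 _]; have /andP[_] := aI i j Hi Hj.
by rewrite le_min Lrow_rowsum // lerDr subr_ge0 => /andP[].
Qed.

Lemma inI_colsum_le {i j} : (1 <= i <= p)%N -> (1 <= j <= p)%N ->
  colsum a i j <= (m j)%:Z.
Proof.
move=> /[dup] Hi /andP[i_gt0 _] Hj; have /andP[_] := aI i j Hi Hj.
by rewrite le_min Lcol_colsum // lerDr subr_ge0 => /andP[].
Qed.

Lemma inI_blocksum_ge {i j} : (1 <= i <= p)%N -> (1 <= j <= p)%N ->
  \sum_(1 <= h < i.+1) (n h)%:Z - \sum_(j.+1 <= h < p.+1) (m h)%:Z <= blocksum a i j.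
Proof.
move=> /[dup] Hi /andP[i_gt0 _] /[dup] Hj /andP[j_gt0 _]; have /andP[+ _] := aI i j Hi Hj.
by rewrite ge_max lraw_blocksum // gerDr subr_le0 => /andP[].
Qed.

Lemma colsum_full_eq0_below {i j} : (1 <= j <= p)%N ->
  colsum a i j = (m j)%:Z -> forall q, (i < q <= p)%N -> a q j = 0%N.
Proof.
move=> Hj full q /[dup] Hq /andP[i_lt_q _].
apply/eqP; rewrite -(eqz_nat _ 0); apply/eqP.
apply: (@sum_prefix_saturated_eq0 _ (fun h => (a h j)%:Z) 1 i.+1 q (m j)%:Z) => //.
exact: inI_colsum_le (range1_of_gt Hq) Hj.
Qed.

Lemma rowsum_full_eq0_right {i j} : (1 <= i <= p)%N ->
  rowsum a i j = (n i)%:Z -> forall t, (j < t <= p)%N -> a i t = 0%N.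
Proof.
move=> Hi full t /[dup] Ht /andP[j_lt_t _].
apply/eqP; rewrite -(eqz_nat _ 0); apply/eqP.
apply: (@sum_prefix_saturated_eq0 _ (fun k => (a i k)%:Z) 1 j.+1 t (n i)%:Z) => //.
exact: inI_rowsum_le Hi (range1_of_gt Ht).
Qed.

Section TightBlock.
Context {i j : nat}.
Hypotheses (Hi : (1 <= i <= p)%N) (Hj : (1 <= j <= p)%N).
Hypothesis tight : blocksum a i j
  = \sum_(1 <= h < i.+1) (n h)%:Z - \sum_(j.+1 <= h < p.+1) (m h)%:Z.

Let Hp : (1 <= p <= p)%N.
Proof. by case/andP: Hj => j_gt0 j_le_p; rewrite leqnn andbT (leq_trans j_gt0 j_le_p). Qed.

Lemma tight_colsum_full t : (j < t <= p)%N -> colsum a i t = (m t)%:Z.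
Proof.
have := inI_blocksum_ge Hi Hp; rewrite (@big_geq _ _ _ p.+1 p.+1) // subr0.
rewrite (@blocksum_splitr a p i j (andP Hj).2) tight -addrA lerDl addrC subr_ge0 => ge.
apply: (@ler_sum_nat_eq _ (colsum a i) (fun t => (m t)%:Z) j.+1 p.+1) => // t' Ht'.
exact: inI_colsum_le Hi (range1_of_gt Ht').
Qed.

Lemma tight_rowsum_full q : (i < q <= p)%N -> rowsum a q j = (n q)%:Z.
Proof.
have := inI_blocksum_ge Hp Hj.
rewrite (@blocksum_splitl a p i j (andP Hi).2) tight.
rewrite (@big_cat_nat _ _ _ i.+1) ?ltnS ?(andP Hi).2 //= addrAC lerD2l => ge.
apply: (@ler_sum_nat_eq _ (rowsum a ^~ j) (fun q => (n q)%:Z) i.+1 p.+1) => // q' Hq'.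
exact: inI_rowsum_le (range1_of_gt Hq') Hj.
Qed.

End TightBlock.

End InI.

Theorem propositionA4 (p : nat) (n m : nat -> nat) (a : nat -> nat -> nat) (i j : nat) :
  inI p n m a -> (1 <= i <= p)%N -> (1 <= j <= p)%N ->
  (* (1) *)
  ((a i j)%:Z = Lij n m a i j ->
     (Lij n m a i j = Lcol m a i j ->
        forall q, (i < q <= p)%N -> a q j = 0%N) /\
     (Lij n m a i j = Lrow n a i j ->
        forall t, (j < t <= p)%N -> a i t = 0%N)) /\
  (* (2) *)
  ((a i j)%:Z = lij p n m a i j -> lij p n m a i j = lraw p n m a i j ->
     (forall t, (j < t <= p)%N -> (a i t)%:Z = Lcol m a i t) /\
     (forall q, (i < q <= p)%N -> (a q j)%:Z = Lrow n a q j) /\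
     (forall q t, (i < q <= p)%N -> (j < t <= p)%N -> a q t = 0%N)).
Proof.
move=> aI /[dup] Hi /andP[i_gt0 _] /[dup] Hj /andP[j_gt0 _]; split.
  move=> aij_max; split=> [Lij_col | Lij_row].
    have full : colsum a i j = (m j)%:Z.
      by move: aij_max; rewrite Lij_col Lcol_colsum //; lia.
    exact: (colsum_full_eq0_below aI Hj full).
  have full : rowsum a i j = (n i)%:Z.
    by move: aij_max; rewrite Lij_row Lrow_rowsum //; lia.
  exact: (rowsum_full_eq0_right aI Hi full).
move=> aij_min lij_raw.
have tight : blocksum a i j
    = \sum_(1 <= h < i.+1) (n h)%:Z - \sum_(j.+1 <= h < p.+1) (m h)%:Z.
  by move: aij_min; rewrite lij_raw lraw_blocksum //; lia.
split; [|split].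
- move=> t Ht; rewrite Lcol_colsum // (tight_colsum_full aI Hi Hj tight _ Ht); lia.
- move=> q Hq; rewrite Lrow_rowsum // (tight_rowsum_full aI Hi Hj tight _ Hq); lia.
- move=> q t Hq Ht.
  have full := tight_colsum_full aI Hi Hj tight _ Ht.
  exact: (colsum_full_eq0_below aI (range1_of_gt Ht) full _ Hq).
Qed.
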